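(* Let $\xi^{(N)},\eta^{(N)}$ ($N\in\mathbb{N}$) and $\xi^{(\infty)},\eta^{(\infty)}$ be $d$-tuples of bounded Hilbert space operators. If $\lim_{N\to\infty}\operatorname{d}_{\mathrm{mr}}(\xi^{(N)}\to\xi^{(\infty)})=0$ and $\lim_{N\to\infty}\operatorname{d}_{\mathrm{mr}}(\eta^{(\infty)}\to\eta^{(N)})=0$, then \[\limsup_{N,M\to\infty}\operatorname{d}_{\mathrm{mr}}(\xi^{(N)}\to\eta^{(M)})\leq\operatorname{d}_{\mathrm{mr}}(\xi^{(\infty)}\to\eta^{(\infty)}).\]
   Context: For $d$-tuples $X,Y$ of $n\times n$ matrices, $\|X-Y\|=\max_i\|X_i-Y_i\|$ (operator norm). The matrix range of $A\in B(\mathcal H)^d$ is $\mathcal{W}(A)=\sqcup_n\mathcal{W}_n(A)$ with $\mathcal{W}_n(A)=\{(\phi(A_1),\dots,\phi(A_d)):\phi:C^*(A)\to M_n\text{ unital completely positive}\}$. The one-sided matrix range distance is $\operatorname{d}_{\mathrm{mr}}(A\to B)=\sup_n\sup_{X\in\mathcal{W}_n(A)}\inf_{Y\in\mathcal{W}_n(B)}\|X-Y\|$. *)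

From HB Require Import structures.
From mathcomp Require Import all_boot all_order all_algebra.
From mathcomp Require Import all_classical all_reals.
From mathcomp Require Import ereal topology normedtype sequences.
From mathcomp Require Import complex.

Set Implicit Arguments.
Unset Strict Implicit.
Unset Printing Implicit Defensive.

Import Order.TTheory GRing.Theory Num.Theory.
Local Open Scope classical_set_scope.
Local Open Scope ring_scope.

Record hilbert (R : realType) := Hilbert {
  hsp :> lmodType (complex R);
  hip : hsp -> hsp -> complex R;
  hip_linl : forall (a : complex R) (x y z : hsp),
      hip (a *: x + y) z = a * hip x z + hip y z;
  hip_sym : forall x y : hsp, hip y x = conjc (hip x y);
  hip_ge0 : forall x : hsp, 0 <= hip x x;
  hip_eq0 : forall x : hsp, hip x x = 0 -> x = 0;
  hip_complete : forall u : nat -> hsp,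
      (forall e : R, 0 < e -> exists N : nat, forall m n : nat, (N <= m)%N -> (N <= n)%N ->
          Num.sqrt (complex.Re (hip (u m - u n) (u m - u n))) < e) ->
      exists x : hsp, forall e : R, 0 < e -> exists N : nat, forall n : nat, (N <= n)%N ->
          Num.sqrt (complex.Re (hip (u n - x) (u n - x))) < e
}.

Section Ops.
Variable R : realType.

Definition hnorm (H : hilbert R) (x : H) : R := Num.sqrt (complex.Re (hip x x)).

(* (possibly unbounded) maps on H; bounded operators are those below *)
Definition op (H : hilbert R) := H -> H.

Definition bounded_op (H : hilbert R) (T : op H) : Prop :=
  (forall (a : complex R) (x y : H), T (a *: x + y) = a *: T x + T y) /\
  exists c : R, forall x : H, hnorm (T x) <= c * hnorm x.

Definition opnormH (H : hilbert R) (T : op H) : \bar R :=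
  ereal_sup [set (hnorm (T x))%:E | x in [set x : H | hnorm x <= 1]].

Definition op_cvg (H : hilbert R) (Ts : nat -> op H) (T : op H) : Prop :=
  forall e : R, 0 < e -> exists N : nat, forall k : nat, (N <= k)%N ->
    (opnormH (fun x => (Ts k x - T x)%R) < e%:E)%E.

Definition is_adj (H : hilbert R) (T S : op H) : Prop :=
  forall x y : H, hip (T x) y = hip x (S y).

(* C*(A): the smallest norm-closed *-subalgebra of B(H) containing 1 and the A_i *)
Inductive cstar_gen (H : hilbert R) (d : nat) (A : 'I_d -> op H) : op H -> Prop :=
| cs_gen (i : 'I_d) : cstar_gen A (A i)
| cs_one : cstar_gen A (fun x => x)
| cs_add (T S : op H) : cstar_gen A T -> cstar_gen A S -> cstar_gen A (fun x => T x + S x)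
| cs_scale (a : complex R) (T : op H) : cstar_gen A T -> cstar_gen A (fun x => a *: T x)
| cs_mul (T S : op H) : cstar_gen A T -> cstar_gen A S -> cstar_gen A (fun x => T (S x))
| cs_adj (T S : op H) : cstar_gen A T -> is_adj T S -> cstar_gen A S
| cs_lim (Ts : nat -> op H) (T : op H) :
    (forall k, cstar_gen A (Ts k)) -> op_cvg Ts T -> cstar_gen A T.

(* positivity of a k x k operator matrix, as an operator on H^k *)
Definition opmx_pos (H : hilbert R) (k : nat) (T : 'I_k -> 'I_k -> op H) : Prop :=
  forall x : 'I_k -> H, 0 <= \sum_(i < k) \sum_(j < k) hip (T i j (x j)) (x i).

Definition blockmx_pos (n k : nat) (B : 'I_k -> 'I_k -> 'M[complex R]_n) : Prop :=
  forall v : 'I_k -> 'cV[complex R]_n,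
    0 <= \sum_(i < k) \sum_(j < k) \sum_(r < n) conjc (v i r ord0) * (B i j *m v j) r ord0.

(* unital completely positive maps C*(A) -> M_n (only values on C*(A) matter) *)
Definition ucp (H : hilbert R) (d n : nat) (A : 'I_d -> op H)
    (phi : op H -> 'M[complex R]_n) : Prop :=
  [/\ (forall (a : complex R) (T S : op H), cstar_gen A T -> cstar_gen A S ->
          phi (fun x => a *: T x + S x) = a *: phi T + phi S),
      phi (fun x => x) = 1%:M &
      forall (k : nat) (T : 'I_k -> 'I_k -> op H),
        (forall i j, cstar_gen A (T i j)) -> opmx_pos T ->
        blockmx_pos (fun i j => phi (T i j))].

Definition mrange (H : hilbert R) (d n : nat) (A : 'I_d -> op H) : set ('I_d -> 'M[complex R]_n) :=
  [set X | exists phi : op H -> 'M[complex R]_n, ucp A phi /\ forall i, X i = phi (A i)].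

Definition vnorm (n : nat) (v : 'cV[complex R]_n) : R :=
  Num.sqrt (\sum_(r < n) complex.Re (v r ord0 * conjc (v r ord0))).

Definition mxnorm (n : nat) (M : 'M[complex R]_n) : \bar R :=
  ereal_sup [set (vnorm (M *m v))%:E | v in [set v : 'cV[complex R]_n | vnorm v <= 1]].

Definition tnorm (d n : nat) (X : 'I_d -> 'M[complex R]_n) : \bar R :=
  \big[Order.max/0%E]_(i < d) mxnorm (X i).

(* d_mr(A -> B), with n ranging over n >= 1 (matrices 'M_n.+1) *)
Definition dmr (H1 H2 : hilbert R) (d : nat) (A : 'I_d -> op H1) (B : 'I_d -> op H2) : \bar R :=
  ereal_sup [set e | exists (n : nat) (X : 'I_d -> 'M[complex R]_n.+1),
     @mrange _ _ n.+1 A X /\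
     e = ereal_inf [set tnorm (fun i => X i - Y i) | Y in @mrange _ _ n.+1 B]].

Definition limsup2 (a : nat -> nat -> \bar R) : \bar R :=
  ereal_inf [set ereal_sup [set e | exists N M : nat, (K <= N)%N /\ (K <= M)%N /\ e = a N M]
            | K in [set: nat]].

End Ops.

From HB Require Import structures.
From mathcomp Require Import all_boot all_order all_algebra.
From mathcomp Require Import all_classical all_reals.
From mathcomp Require Import ereal topology normedtype sequences.
From mathcomp Require Import complex.
From mathcomp Require Import ring lra.

Set Implicit Arguments.
Unset Strict Implicit.
Unset Printing Implicit Defensive.

Import Order.TTheory GRing.Theory Num.Theory.
Import numFieldNormedType.Exports.
Local Open Scope classical_set_scope.
Local Open Scope ring_scope.

(* Once N and M are large, every point of W(xi^(N)) is within e/2 of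
   W(xi^(oo)), every point of W(xi^(oo)) is within c of W(eta^(oo)) for any c
   above d_mr(xi^(oo) -> eta^(oo)), and every point of W(eta^(oo)) is within
   e/2 of W(eta^(M)).  Chaining the three approximations through the triangle
   inequality for the max of operator norms puts W(xi^(N)) within c + e of
   W(eta^(M)). *)

Lemma sum_sqr_mul_lagrange (R : comPzRingType) (n : nat) (x y : 'I_n -> R) :
  ((\sum_i x i ^+ 2) * (\sum_i y i ^+ 2) - (\sum_i x i * y i) ^+ 2) *+ 2 =
  \sum_i \sum_j (x i * y j - x j * y i) ^+ 2.
Proof.
have sum_mul_sum (u v : 'I_n -> R) :
    (\sum_i u i) * (\sum_j v j) = \sum_i \sum_j u i * v j.
  by rewrite big_distrl /=; apply: eq_bigr => i _; rewrite big_distrr.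
rewrite mulrnBl mulr2n {2}mulrC !sum_mul_sum expr2 sum_mul_sum.
rewrite -big_split -!sumrMnl -sumrB; apply: eq_bigr => i _.
rewrite -big_split -!sumrMnl -sumrB; apply: eq_bigr => j _ /=; ring.
Qed.

Lemma cauchy_schwarz_sum (R : realDomainType) (n : nat) (x y : 'I_n -> R) :
  (\sum_i x i * y i) ^+ 2 <= (\sum_i x i ^+ 2) * (\sum_i y i ^+ 2).
Proof.
rewrite -subr_ge0 -(pmulrn_lge0 _ (ltn0Sn 1)) sum_sqr_mul_lagrange.
by apply: sumr_ge0 => i _; apply: sumr_ge0 => j _; exact: sqr_ge0.
Qed.

Lemma minkowski_sum (R : rcfType) (n : nat) (x y : 'I_n -> R) :
  Num.sqrt (\sum_i (x i + y i) ^+ 2) <=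
  Num.sqrt (\sum_i x i ^+ 2) + Num.sqrt (\sum_i y i ^+ 2).
Proof.
set A := \sum_i x i ^+ 2; set B := \sum_i y i ^+ 2.
have sum_sqr_ge0 (u : 'I_n -> R) : 0 <= \sum_i u i ^+ 2.
  by apply: sumr_ge0 => i _; exact: sqr_ge0.
have cs : \sum_i x i * y i <= Num.sqrt A * Num.sqrt B.
  rewrite -sqrtrM ?sum_sqr_ge0 // (le_trans (ler_norm _)) //.
  by rewrite -sqrtr_sqr ler_sqrt ?cauchy_schwarz_sum // mulr_ge0 ?sum_sqr_ge0.
have expand : \sum_i (x i + y i) ^+ 2 = A + B + 2 * \sum_i x i * y i.
  by rewrite /A /B -big_split mulr_sumr -big_split /=; apply: eq_bigr => i _; ring.
rewrite -(@ler_pXn2r _ 2) // ?nnegrE ?addr_ge0 ?sqrtr_ge0 //.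
by rewrite sqrrD !sqr_sqrtr ?sum_sqr_ge0 // expand; lra.
Qed.

Lemma Re_mulcJ (R : rcfType) (z : complex R) :
  complex.Re (z * conjc z) = Normc.normc z ^+ 2.
Proof. by case: z => a b; rewrite /= sqr_sqrtr ?addr_ge0 ?sqr_ge0 //; ring. Qed.

Lemma normc_ge0 (R : rcfType) (z : complex R) : 0 <= Normc.normc z.
Proof. by case: z => a b; exact: sqrtr_ge0. Qed.

Section TupleNorm.
Variable R : realType.

Lemma vnormE n (v : 'cV[complex R]_n) :
  vnorm v = Num.sqrt (\sum_r Normc.normc (v r ord0) ^+ 2).
Proof. by congr Num.sqrt; apply: eq_bigr => r _; rewrite Re_mulcJ. Qed.

Lemma vnormD n (v w : 'cV[complex R]_n) : vnorm (v + w) <= vnorm v + vnorm w.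
Proof.
rewrite !vnormE (le_trans _ (minkowski_sum (fun r => Normc.normc (v r ord0))
  (fun r => Normc.normc (w r ord0)))) // ler_sqrt; last first.
  by apply: sumr_ge0 => r _; exact: sqr_ge0.
apply: ler_sum => r _; rewrite mxE ler_pXn2r // ?nnegrE ?addr_ge0 ?normc_ge0 //.
exact: le_normcD.
Qed.

Lemma mxnormD n (M N : 'M[complex R]_n) :
  (mxnorm (M + N) <= mxnorm M + mxnorm N)%E.
Proof.
apply: ge_ereal_sup => _ [v v1 <-]; rewrite mulmxDl.
rewrite (le_trans (_ : _ <= (vnorm (M *m v) + vnorm (N *m v))%:E)%E) ?lee_fin ?vnormD //.
by rewrite EFinD leeD //; apply: ereal_sup_ubound; exists v.
Qed.

Lemma tnorm_ge0 d n (X : 'I_d -> 'M[complex R]_n) : (0 <= tnorm X)%E.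
Proof. exact: bigmax_ge_id. Qed.

Lemma tnormD d n (X Y : 'I_d -> 'M[complex R]_n) :
  (tnorm (fun i => (X i + Y i)%R) <= tnorm X + tnorm Y)%E.
Proof.
apply: bigmax_le => [|i _]; first by rewrite adde_ge0 ?tnorm_ge0.
by rewrite (le_trans (mxnormD _ _)) // leeD // le_bigmax.
Qed.

Lemma tnormB_le d n (X Y Z : 'I_d -> 'M[complex R]_n) :
  (tnorm (fun i => (X i - Z i)%R) <=
   tnorm (fun i => (X i - Y i)%R) + tnorm (fun i => (Y i - Z i)%R))%E.
Proof.
have -> : (fun i => (X i - Z i)%R) = (fun i => (X i - Y i) + (Y i - Z i))%R.
  by apply: funext => i; rewrite addrA subrK.
exact: tnormD.
Qed.

End TupleNorm.

Section MatrixRangeDistance.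
Variables (R : realType) (d : nat).

Definition mrange_within (H1 H2 : hilbert R) (A : 'I_d -> op H1) (B : 'I_d -> op H2)
    (c : \bar R) : Prop :=
  forall n (X : 'I_d -> 'M[complex R]_n.+1), mrange A X ->
    exists2 Y, mrange B Y & (tnorm (fun i => (X i - Y i)%R) < c)%E.

Variables (H1 H2 H3 : hilbert R).
Implicit Types (A : 'I_d -> op H1) (B : 'I_d -> op H2) (C : 'I_d -> op H3).

Lemma dmr_lt_within A B c : (dmr A B < c)%E -> mrange_within A B c.
Proof.
move=> ABc n X AX.
have : (ereal_inf [set tnorm (fun i => (X i - Y i)%R) | Y in mrange B] < c)%E.
  by apply: le_lt_trans ABc; apply: ereal_sup_ubound; exists n, X.
by case/ereal_inf_lt => _ [Y BY <-]; exists Y.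
Qed.

Lemma dmr_le_within A B c : mrange_within A B c -> (dmr A B <= c)%E.
Proof.
move=> ABc; apply: ge_ereal_sup => _ [n [X [AX ->]]].
have [Y BY XYc] := ABc n X AX.
by apply: le_trans (ltW XYc); apply: ereal_inf_lbound; exists Y.
Qed.

Lemma mrange_within_trans A B C (a b : R) :
  mrange_within A B a%:E -> mrange_within B C b%:E -> mrange_within A C (a + b)%:E.
Proof.
move=> ABa BCb n X AX.
have [Y BY XYa] := ABa n X AX; have [Z CZ YZb] := BCb n Y BY.
by exists Z => //; rewrite (le_lt_trans (tnormB_le _ Y _)) // EFinD lteD.
Qed.

End MatrixRangeDistance.

Lemma cvge0_lt_eventually (R : realType) (u : nat -> \bar R) (e : R) :
  u n @[n --> \oo] --> 0%E -> 0 < e -> exists K, forall n, (K <= n)%N -> (u n < e%:E)%E.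
Proof.
move=> /fine_cvgP[u_fin /cvgr_dist_lt u_near] e0.
have [K _ uK] : \forall n \near \oo, (u n < e%:E)%E.
  apply: filterS2 u_fin (u_near _ e0) => n un_fin.
  by rewrite sub0r normrN -(fineK un_fin) lte_fin; apply: le_lt_trans; exact: ler_norm.
by exists K.
Qed.

Lemma lee_from_fin_above (R : realType) (x y : \bar R) :
  (forall c e : R, (y < c%:E)%E -> 0 < e -> (x <= (c + e)%:E)%E) -> (x <= y)%E.
Proof.
case: y => [r | | ] xy; last 2 first.
- exact: leey.
- case: x xy => [s | | ] // xy.
    by exfalso; have := xy (s - 2) 1 (ltNyr _) ltr01; rewrite lee_fin; lra.
  by have := xy 0 1 (ltNyr _) ltr01.
apply/lee_addgt0Pr => e e0; have := xy (r + e / 2) (e / 2).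
rewrite lte_fin ltrDl divr_gt0 // => /(_ isT isT).
by rewrite -addrA -splitr.
Qed.

Lemma limsup2_le (R : realType) (a : nat -> nat -> \bar R) (b : \bar R) (K : nat) :
  (forall N M, (K <= N)%N -> (K <= M)%N -> (a N M <= b)%E) -> (limsup2 a <= b)%E.
Proof.
move=> aKb; apply: ge_ereal_inf; exists (ereal_sup [set e | exists N M : nat,
    (K <= N)%N /\ (K <= M)%N /\ e = a N M]); first by exists K.
by apply: ge_ereal_sup => _ [N [M [KN [KM ->]]]]; exact: aKb.
Qed.

Theorem proposition2p6 (R : realType) (d : nat)
  (Hxi : nat -> hilbert R) (xi : forall N : nat, 'I_d -> op (Hxi N))
  (Hxiinf : hilbert R) (xiinf : 'I_d -> op Hxiinf)
  (Heta : nat -> hilbert R) (eta : forall N : nat, 'I_d -> op (Heta N))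
  (Hetainf : hilbert R) (etainf : 'I_d -> op Hetainf)
  (bxi : forall (N : nat) (i : 'I_d), bounded_op (xi N i))
  (bxiinf : forall i : 'I_d, bounded_op (xiinf i))
  (beta : forall (N : nat) (i : 'I_d), bounded_op (eta N i))
  (betainf : forall i : 'I_d, bounded_op (etainf i))
  (hxi : dmr (xi N) xiinf @[N --> \oo] --> 0%E)
  (heta : dmr etainf (eta N) @[N --> \oo] --> 0%E) :
  (limsup2 (fun N M => dmr (xi N) (eta M)) <= dmr xiinf etainf)%E.
Proof.
apply: lee_from_fin_above => c e Dc e0.
have e2 : 0 < e / 2 by rewrite divr_gt0.
have [K1 xiK1] := cvge0_lt_eventually hxi e2.
have [K2 etaK2] := cvge0_lt_eventually heta e2.
apply: (@limsup2_le _ _ _ (maxn K1 K2)) => N M.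
rewrite !geq_max => /andP[K1N _] /andP[_ K2M].
have -> : c + e = e / 2 + c + e / 2 by rewrite [RHS]addrAC -splitr addrC.
apply: dmr_le_within.
apply: mrange_within_trans _ (dmr_lt_within (etaK2 _ K2M)).
apply: mrange_within_trans _ (dmr_lt_within Dc).
exact: dmr_lt_within (xiK1 _ K1N).
Qed.
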